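(* The Krull dimension of $\mathcal{A}(\bm{p})$ is infinite: for every $N\in\mathbb{N}$ there is a strictly decreasing chain $P_{N+1}\subsetneq P_N\subsetneq\cdots\subsetneq P_1$ of proper prime ideals of $\mathcal{A}(\bm{p})$.
   Context: Fix $\bm{p}:\mathbb{N}_0\to(0,\infty)$ with $\lim_{n\to\infty}\bm{p}(n)^{1/n}=\infty$. For an entire function $f$ write $f(z)=\sum_{n\ge0}\widehat f(n)z^n$. $\mathcal{A}(\bm{p})$ is the set of entire functions $f$ with $\sup_{n\ge 0}\bm{p}(n)|\widehat f(n)|<\infty$, with pointwise addition and scalar multiplication and the weighted Hadamard product $(f\ast g)(z)=\sum_{n\ge0}\bm{p}(n)\widehat f(n)\widehat g(n)z^n$; it is a commutative unital ring. The Krull dimension of a commutative ring is the supremum of lengths of chains of distinct proper prime ideals. *)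

From HB Require Import structures.
From mathcomp Require Import all_boot all_order all_algebra.
From mathcomp Require Import complex.
From mathcomp Require Import all_classical all_reals all_analysis.
Set Implicit Arguments. Unset Strict Implicit. Unset Printing Implicit Defensive.
Import Order.TTheory GRing.Theory Num.Theory ComplexField.
Local Open Scope ring_scope.
Local Open Scope classical_set_scope.

(* An entire function f is identified with its Taylor coefficient sequence
   n |-> \hat f(n).  Elements of A(p) are the coefficient sequences a with
   sup_n p(n) |a(n)| < oo (such sequences automatically define entire
   functions since p(n)^(1/n) -> oo). *)

Section Apdef.
Variable R : realType.

Definition admissible_weight (p : nat -> R) : Prop :=
  (forall n, 0 < p n) /\
  ((fun n : nat => powR (p n) (n%:R)^-1) @ \oo --> +oo).

Definition inA (p : nat -> R) (a : nat -> R[i]) : Prop :=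
  exists M : R, forall n, p n * Normc.normc (a n) <= M.

Definition Azero : nat -> R[i] := fun _ => 0.
Definition Aadd (a b : nat -> R[i]) : nat -> R[i] := fun n => a n + b n.
Definition Aopp (a : nat -> R[i]) : nat -> R[i] := fun n => - a n.
Definition Amul (p : nat -> R) (a b : nat -> R[i]) : nat -> R[i] :=
  fun n => ((p n)%:C)%C * a n * b n.

Definition is_ideal (p : nat -> R) (I : set (nat -> R[i])) : Prop :=
  [/\ (forall a, I a -> inA p a),
      I Azero,
      (forall a b, I a -> I b -> I (Aadd a b)),
      (forall a, I a -> I (Aopp a)) &
      (forall r a, inA p r -> I a -> I (Amul p r a))].

Definition is_proper_ideal (p : nat -> R) (I : set (nat -> R[i])) : Prop :=
  is_ideal p I /\ exists a, inA p a /\ ~ I a.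

Definition is_prime_ideal (p : nat -> R) (I : set (nat -> R[i])) : Prop :=
  is_proper_ideal p I /\
  forall a b, inA p a -> inA p b -> I (Amul p a b) -> I a \/ I b.

Definition strict_subset (I J : set (nat -> R[i])) : Prop :=
  I `<=` J /\ exists a, J a /\ ~ I a.

End Apdef.

From HB Require Import structures.
From mathcomp Require Import all_boot all_order all_algebra.
From mathcomp Require Import complex.
From mathcomp Require Import all_classical all_reals all_analysis.
From mathcomp Require Import zify.
Set Implicit Arguments. Unset Strict Implicit. Unset Printing Implicit Defensive.
Import Order.TTheory GRing.Theory Num.Theory.
Local Open Scope ring_scope.
Local Open Scope classical_set_scope.

(* Write |a|_n := p(n) |a(n)| for the weighted modulus of
   a coefficient sequence, so that A(p) consists of the sequences with
   sup_n |a|_n < oo and the weighted Hadamard product is multiplicative for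
   it: |a * b|_n = |a|_n |b|_n.  Fix a nonprincipal ultrafilter U on N.  For a
   "rate" d : N -> (0, 1/2] the set
       P_d = { a in A(p) : for every m, |a|_n <= d(n)^m for U-almost all n }
   is a proper prime ideal (primality is where U being an ultrafilter is
   used), and if d' <= d^m holds U-almost everywhere for every m, then
   P_d' is strictly contained in P_d, the witness being the sequence of
   weighted modulus d'.  The rates d_k(n) = 2^-(n^k + 1) satisfy
   d_(k+1) <= d_k^m for all large n, hence U-almost everywhere, and the
   ideals P_(d_k), k = 1 .. N+1, form the required chain. *)

Lemma normc_real (R : realType) (x : R) : Normc.normc (x%:C)%C = `|x|.
Proof. by rewrite /Normc.normc /= expr0n addr0 sqrtr_sqr. Qed.

Lemma normc_ge0 (R : realType) (z : R[i]) : 0 <= Normc.normc z.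
Proof. by case: z => x y; rewrite /Normc.normc sqrtr_ge0. Qed.

(* A bounded quantity is eventually killed by powers of 1/2; this lets the
   ideals P_d absorb products with arbitrary elements of A(p). *)
Lemma half_powers_absorb (R : realType) (M : R) : exists j, M * 2^-1 ^+ j <= 1.
Proof.
have [j /andP[_ M_lt]] := unstable.leq_ltn_expn (Num.Def.truncn M).
exists j.+1; rewrite exprVn ler_pdivrMr ?exprn_gt0 // mul1r.
by apply: ltW; apply: lt_le_trans (truncnS_gt M) _; rewrite -natrX ler_nat ltnW.
Qed.

Section WeightedModulus.
Variables (R : realType) (p : nat -> R).
Hypothesis p_gt0 : forall n, 0 < p n.

Definition wmod (a : nat -> R[i]) (n : nat) : R := p n * Normc.normc (a n).

Lemma wmod_ge0 a n : 0 <= wmod a n.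
Proof. by rewrite mulr_ge0 ?normc_ge0 // ltW. Qed.

Lemma wmod0 n : wmod (@Azero R) n = 0.
Proof. by rewrite /wmod Normc.normc0 mulr0. Qed.

Lemma wmodD a b n : wmod (Aadd a b) n <= wmod a n + wmod b n.
Proof. by rewrite /wmod -mulrDr ler_wpM2l ?le_normcD // ltW. Qed.

Lemma wmodN a n : wmod (Aopp a) n = wmod a n.
Proof. by rewrite /wmod /Aopp normcN. Qed.

Lemma wmodM a b n : wmod (Amul p a b) n = wmod a n * wmod b n.
Proof.
rewrite /wmod /Amul !Normc.normcM normc_real gtr0_norm //.
by rewrite !mulrA; congr (_ * _); rewrite mulrAC.
Qed.

Definition with_wmod (c : nat -> R) : nat -> R[i] := fun n => (c n / p n)%:C%C.

Lemma wmod_with_wmod c n : 0 < c n -> wmod (with_wmod c) n = c n.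
Proof.
move=> c_gt0; rewrite /wmod normc_real gtr0_norm ?divr_gt0 //.
by rewrite mulrC divfK // lt0r_neq0.
Qed.

End WeightedModulus.

Definition rate (R : realType) (d : nat -> R) : Prop :=
  forall n, 0 < d n <= 2^-1.

Section DecayIdeals.
Variables (R : realType) (p : nat -> R) (U : set_system nat).
Hypothesis p_gt0 : forall n, 0 < p n.
Hypothesis U_ultra : UltraFilter U.

Definition decay_ideal (d : nat -> R) (a : nat -> R[i]) : Prop :=
  inA p a /\ forall m, U [set n | wmod p a n <= d n ^+ m].

Lemma ultra_ex (A : set nat) : U A -> exists n, A n.
Proof. exact: filter_ex. Qed.

Lemma rate_not_above_square (d : nat -> R) : rate d ->
  ~ U [set n | d n <= d n ^+ 2].
Proof.
move=> d_rate /ultra_ex [n /=]; have /andP[d_gt0 d_le] := d_rate n.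
rewrite expr2 ler_pMr // leNgt => /negP; apply.
by apply: le_lt_trans d_le _; rewrite invf_lt1 // ltr1n.
Qed.

(* Closure of P_d under sums: 2 d^(m+1) <= d^m since d <= 1/2. *)
Lemma decay_idealD d a b : rate d ->
  decay_ideal d a -> decay_ideal d b -> decay_ideal d (Aadd a b).
Proof.
move=> d_rate [[Ma Ma_bd] a_dec] [[Mb Mb_bd] b_dec]; split.
  exists (Ma + Mb) => n.
  exact: le_trans (wmodD p_gt0 a b n) (lerD (Ma_bd n) (Mb_bd n)).
move=> m; apply: filterS (filterI (a_dec m.+1) (b_dec m.+1)) => n [/= an bn].
have /andP[/ltW d_ge0 d_le] := d_rate n.
apply: le_trans (wmodD p_gt0 a b n) (le_trans (lerD an bn) _).
rewrite -mulr2n -mulr_natr exprS mulrAC ler_piMl ?exprn_ge0 //.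
by rewrite -ler_pdivlMr // div1r.
Qed.

Lemma decay_idealN d a : decay_ideal d a -> decay_ideal d (Aopp a).
Proof.
move=> [[M M_bd] a_dec]; split.
  by exists M => n; have := wmodN p a n; rewrite /wmod => ->.
by move=> m; apply: filterS (a_dec m) => n /=; rewrite wmodN.
Qed.

(* Absorption: a bounded factor is compensated by finitely many powers of d. *)
Lemma decay_idealM d r a : rate d ->
  inA p r -> decay_ideal d a -> decay_ideal d (Amul p r a).
Proof.
move=> d_rate [M M_bd] [[Ma Ma_bd] a_dec].
have M_bd' n : wmod p r n <= M := M_bd n.
have M_ge0 : 0 <= M := le_trans (wmod_ge0 p_gt0 r 0) (M_bd' 0%N).
split.
  exists (M * Ma) => n; have := wmodM p_gt0 r a n; rewrite {1}/wmod => ->.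
  by rewrite ler_pM ?wmod_ge0 //; exact: Ma_bd.
move=> m; have [j Mj] := half_powers_absorb M.
apply: filterS (a_dec (m + j)%N) => n /= an; rewrite wmodM //.
have /andP[/ltW d_ge0 d_le] := d_rate n.
apply: le_trans (ler_pM (wmod_ge0 p_gt0 _ _) (wmod_ge0 p_gt0 _ _) (M_bd' n) an) _.
rewrite exprD mulrCA ler_piMr ?exprn_ge0 //; apply: le_trans Mj.
by rewrite ler_wpM2l //; apply: lerXn2r; rewrite ?nnegrE ?invr_ge0.
Qed.

Lemma decay_ideal_is_ideal d : rate d -> is_ideal p (decay_ideal d).
Proof.
move=> d_rate; split.
- by move=> a [].
- split; first by exists 0 => n; have := wmod0 p n; rewrite /wmod => ->.
  move=> m; apply: filterS (@filterT _ U _) => n _.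
  by have /andP[/ltW d_ge0 _] := d_rate n; rewrite /= wmod0 exprn_ge0.
- by move=> a b; exact: decay_idealD.
- exact: decay_idealN.
- by move=> r a; exact: decay_idealM.
Qed.

(* The unit of A(p) (weighted modulus 1) does not decay. *)
Lemma decay_ideal_proper d : rate d -> is_proper_ideal p (decay_ideal d).
Proof.
move=> d_rate; split; first exact: decay_ideal_is_ideal.
have one n : wmod p (with_wmod p (fun=> 1)) n = 1 by rewrite wmod_with_wmod.
exists (with_wmod p (fun=> 1)); split.
  by exists 1 => n; have := one n; rewrite /wmod => ->.
move=> [_ /(_ 2%N) sq]; apply: (rate_not_above_square d_rate).
apply: filterS sq => n /=; rewrite one; apply: le_trans.
by have /andP[_ d_le] := d_rate n; apply: le_trans d_le _; rewrite invf_le1 ?ler1n.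
Qed.

(* Ultrafilter dichotomy: an element of A(p) outside P_d stays above some
   power of d, U-almost everywhere. *)
Lemma not_decay_ideal d a : inA p a -> ~ decay_ideal d a ->
  exists m, U [set n | d n ^+ m < wmod p a n].
Proof.
move=> a_in a_out; apply: contrapT => no_m; apply: a_out; split=> // m.
have [//|a_above] := in_ultra_setVsetC [set n | wmod p a n <= d n ^+ m] U_ultra.
exfalso; apply: no_m; exists m.
by apply: filterS a_above => n /= /negP; rewrite ltNge.
Qed.

(* Primality: if a, b lie outside P_d then their product stays above
   d^(m_a + m_b) on a set of U. *)
Lemma decay_ideal_prime d : rate d -> is_prime_ideal p (decay_ideal d).
Proof.
move=> d_rate; split; first exact: decay_ideal_proper.
move=> a b a_in b_in [_ ab_dec].
have [a_dec|a_out] := pselect (decay_ideal d a); first by left.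
have [b_dec|b_out] := pselect (decay_ideal d b); first by right.
have [ma a_above] := not_decay_ideal a_in a_out.
have [mb b_above] := not_decay_ideal b_in b_out.
have [n [[/= an bn]]] :=
  ultra_ex (filterI (filterI a_above b_above) (ab_dec (ma + mb)%N)).
have /andP[/ltW d_ge0 _] := d_rate n.
by rewrite /= wmodM // exprD leNgt ltr_pM ?exprn_ge0.
Qed.

(* If d' lies U-almost everywhere below every power of d, then P_d' is
   strictly smaller than P_d: the sequence of weighted modulus d' separates
   them. *)
Lemma decay_ideal_strict d d' : rate d' ->
  (forall m, U [set n | d' n <= d n ^+ m]) ->
  strict_subset (decay_ideal d') (decay_ideal d).
Proof.
move=> d'_rate d'_below; split.
  move=> a [a_in a_dec]; split=> // m.
  apply: filterS (filterI (a_dec 1%N) (d'_below m)) => n [/= an dn].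
  by rewrite expr1 in an; exact: le_trans dn.
have d'_gt0 n : 0 < d' n by have /andP[] := d'_rate n.
have w_eq n : wmod p (with_wmod p d') n = d' n by rewrite wmod_with_wmod.
exists (with_wmod p d'); split; last first.
  move=> [_ /(_ 2%N) sq]; apply: (rate_not_above_square d'_rate).
  by apply: filterS sq => n /=; rewrite w_eq.
split; last by move=> m; apply: filterS (d'_below m) => n /=; rewrite w_eq.
by exists 2^-1 => n; have := w_eq n; rewrite /wmod => ->; case/andP: (d'_rate n).
Qed.

End DecayIdeals.

Definition power_rate (R : realType) (k n : nat) : R := 2^-1 ^+ (n ^ k).+1.

Lemma power_rate_rate (R : realType) k : rate (power_rate R k).
Proof.
move=> n; rewrite exprn_gt0 ?invr_gt0 //= ler_iXnr // ?invr_ge0 //.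
by rewrite invf_le1 // ler1n.
Qed.

(* d_(k+1) <= d_k^m as soon as n > 2m, since n^(k+1) + 1 >= m (n^k + 1). *)
Lemma power_rate_faster (R : realType) k m :
  \forall n \near \oo, power_rate R k.+1 n <= power_rate R k n ^+ m.
Proof.
exists (2 * m).+1 => // n /= n_gt.
rewrite /power_rate -exprM ler_wiXn2l ?invr_ge0 ?invf_le1 ?ler1n //.
have : (0 < n ^ k)%N by rewrite expn_gt0; apply/orP; left; lia.
rewrite expnS; nia.
Qed.

Theorem mainTheorem13 (R : realType) (p : nat -> R) (hp : admissible_weight p)
  (N : nat) :
  exists P : nat -> set (nat -> R[i]),
    (forall k, (1 <= k <= N.+1)%N -> is_prime_ideal p (P k)) /\
    (forall k, (1 <= k <= N)%N -> strict_subset (P k.+1) (P k)).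
Proof.
have [p_gt0 _] := hp.
(* a nonprincipal ultrafilter: it contains every cofinite set *)
have [U [U_ultra U_cofinite]] := ultraFilterLemma (@eventually_filter).
exists (fun k => decay_ideal p U (power_rate R k)); split.
  by move=> k _; exact: (decay_ideal_prime p_gt0 U_ultra (power_rate_rate R k)).
move=> k _; apply: (decay_ideal_strict p_gt0 U_ultra (power_rate_rate R k.+1)).
by move=> m; apply: U_cofinite; exact: (power_rate_faster R k m).
Qed.
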